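(* Let $\Theta$ be finite, let $\mu$ be an updating rule that systematically distorts updated beliefs with distortion functions $(D_{p'})_{p'}$, and let $p\in\Delta(\Theta)$ have full support. Let $\sigma,\tau$ be experiments and $s,t$ signals, and set $q:=\mu_B(\sigma,p)(\cdot\mid s)$ and $r:=\mu_B(\tau,q)(\cdot\mid t)$, where $q$ and $D_p(q)$ have full support and $\sum_{\theta}q(\theta)\tau_\theta(t)>0$. Then \[\mu(\tau,D_p(q))(\cdot\mid t)=D_{D_p(q)}\!\left(\frac{r\cdot\frac{D_p(q)}{q}}{\sum_{\theta'\in\Theta}r(\theta')\frac{D_p(q)(\theta')}{q(\theta')}}\right),\] where products and quotients of beliefs are taken componentwise in $\theta$.
   Context: An experiment is $\tau=(\tau_\theta)_{\theta\in\Theta}$ with $\tau_\theta\in\Delta(S)$ for a fixed finite signal set $S$. An updating rule is a map $\mu$ sending an experiment $\sigma$, a prior $p\in\Delta(\Theta)$ and a signal $s\in S$ to a posterior $\mu(\sigma,p)(\cdot\mid s)\in\Delta(\Theta)$. Bayesian updating: $\mu_B(\sigma,p)(\theta\mid s)=\frac{\sigma_\theta(s)p(\theta)}{\sum_{\theta'}\sigma_{\theta'}(s)p(\theta')}$ whenever the denominator is positive. The rule $\mu$ systematically distorts updated beliefs if for every full-support prior $p'$ there is a function $D_{p'}:\Delta(\Theta)\to\Delta(\Theta)$ such that $\mu(\sigma,p')(\cdot\mid s)=D_{p'}(\mu_B(\sigma,p')(\cdot\mid s))$ for all experiments $\sigma$ and signals $s$. *)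

From HB Require Import structures.
From mathcomp Require Import all_boot all_order all_algebra.
Set Implicit Arguments. Unset Strict Implicit. Unset Printing Implicit Defensive.
Import Order.TTheory GRing.Theory Num.Theory.
Local Open Scope ring_scope.

Section Beliefs.
Variables (R : realFieldType) (T : finType).

Definition is_dist (f : {ffun T -> R}) : bool :=
  [forall x, 0 <= f x] && (\sum_x f x == 1).

Record belief := Belief { bel :> {ffun T -> R}; bel_dist : is_dist bel }.
HB.instance Definition _ := [isSub for bel].
HB.instance Definition _ := [Equality of belief by <:].

Definition full_support (p : belief) : Prop := forall x, 0 < p x.
End Beliefs.

Definition experiment (R : realFieldType) (Th S : finType) := Th -> belief R S.

Definition updating_rule (R : realFieldType) (Th S : finType) :=
  experiment R Th S -> belief R Th -> S -> belief R Th.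

Definition bayes_den (R : realFieldType) (Th S : finType)
  (sig : experiment R Th S) (p : belief R Th) (s : S) : R :=
  \sum_th sig th s * p th.

Definition bayes_fun (R : realFieldType) (Th S : finType)
  (sig : experiment R Th S) (p : belief R Th) (s : S) : {ffun Th -> R} :=
  [ffun th => sig th s * p th / bayes_den sig p s].

(* Only meaningful when bayes_den sig p s > 0
   (then bayes_fun is a distribution); otherwise a dummy value (the prior)
   is returned, which is never used in the statements below. *)
Definition bayes (R : realFieldType) (Th S : finType) : updating_rule R Th S :=
  fun sig p s => insubd p (bayes_fun sig p s).

Definition distorts_with (R : realFieldType) (Th S : finType)
  (mu : updating_rule R Th S) (D : belief R Th -> belief R Th -> belief R Th) : Prop :=
  forall p' : belief R Th, full_support p' ->
  forall (sig : experiment R Th S) (s : S), 0 < bayes_den sig p' s ->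
    mu sig p' s = D p' (bayes sig p' s).

Definition systematically_distorts (R : realFieldType) (Th S : finType)
  (mu : updating_rule R Th S) : Prop :=
  exists D, distorts_with mu D.

(* Packaged as a belief via insubd (default r, never used when the
   expression is a distribution, which is the case in the theorem). *)
Definition reweight_fun (R : realFieldType) (Th : finType) (r d q : belief R Th)
  : {ffun Th -> R} :=
  [ffun th => r th * (d th / q th) / \sum_th' r th' * (d th' / q th')].

Definition reweight (R : realFieldType) (Th : finType) (r d q : belief R Th)
  : belief R Th := insubd r (reweight_fun r d q).

From HB Require Import structures.
From mathcomp Require Import all_boot all_order all_algebra.
From mathcomp Require Import ring.
Set Implicit Arguments. Unset Strict Implicit. Unset Printing Implicit Defensive.
Import Order.TTheory GRing.Theory Num.Theory.
Local Open Scope ring_scope.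

(* The Bayesian posterior from prior d is proportional to tau(t) d
   = (tau(t) q) (d / q), i.e. to the posterior r from prior q reweighted by the
   likelihood ratio d / q; normalising both sides shows that the bracket in the
   theorem is exactly mu_B(tau, D_p(q))(. | t).  Since D_p(q) has full support
   and the signal t has positive probability under it, the distortion property
   at the prior D_p(q) then gives the claim. *)

Section Bayes.
Variables (R : realFieldType) (Th S : finType).
Implicit Types (p q d : belief R Th) (sig : experiment R Th S) (s : S).

Lemma belief_ge0 (T : finType) (p : belief R T) x : 0 <= p x.
Proof. by have /andP[/forallP] := bel_dist p. Qed.

Lemma bayes_denE sig p s : bayes_den sig p s = \sum_th p th * sig th s.
Proof. by apply: eq_bigr => th _; rewrite mulrC. Qed.

Lemma bayes_fun_dist sig p s :
  0 < bayes_den sig p s -> is_dist (bayes_fun sig p s).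
Proof.
move=> den_gt0; apply/andP; split.
  apply/forallP=> th; rewrite ffunE.
  by apply: divr_ge0; [rewrite mulr_ge0 ?belief_ge0 | exact: ltW].
apply/eqP; under eq_bigr => th _ do rewrite ffunE.
by rewrite -mulr_suml divff ?gt_eqF.
Qed.

Lemma bayesE sig p s : 0 < bayes_den sig p s ->
  bayes sig p s = bayes_fun sig p s :> {ffun Th -> R}.
Proof. by move=> den_gt0; rewrite /bayes insubdK //; apply: bayes_fun_dist. Qed.

(* A signal has positive probability under some prior only if some state
   gives it positive probability, and then so does every full-support prior. *)
Lemma bayes_den_gt0_full_support sig p p' s :
  full_support p' -> 0 < bayes_den sig p s -> 0 < bayes_den sig p' s.
Proof.
move=> p'_full; apply: contraTT; rewrite !ltNge !negbK => den_le0.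
have term_eq0 th : sig th s * p' th = 0.
  apply/eqP; rewrite eq_le mulr_ge0 ?belief_ge0 // andbT.
  apply: le_trans den_le0; rewrite /bayes_den (bigD1 th) //= lerDl.
  by rewrite sumr_ge0 // => i _; rewrite mulr_ge0 ?belief_ge0.
rewrite /bayes_den big1 // => th _.
have /eqP := term_eq0 th; rewrite mulf_eq0 (gt_eqF (p'_full th)) orbF => /eqP ->.
by rewrite mul0r.
Qed.

Section ChangeOfPrior.
Variables (tau : experiment R Th S) (t : S) (q d : belief R Th).
Hypotheses (q_full : full_support q) (den_d_gt0 : 0 < bayes_den tau d t).

Let den_q_gt0 : 0 < bayes_den tau q t.
Proof. exact: bayes_den_gt0_full_support den_d_gt0. Qed.

Let bayes_qE th : bayes tau q t th = tau th t * q th / bayes_den tau q t.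
Proof. by rewrite bayesE // ffunE. Qed.

Lemma sum_likelihood_ratio :
  \sum_th bayes tau q t th * (d th / q th)
    = bayes_den tau d t / bayes_den tau q t.
Proof.
rewrite [bayes_den tau d t]/bayes_den mulr_suml; apply: eq_bigr => th _.
by rewrite bayes_qE; field; rewrite !gt_eqF ?q_full.
Qed.

Lemma reweight_bayes : reweight (bayes tau q t) d q = bayes tau d t.
Proof.
apply: val_inj; rewrite /= bayesE // /reweight.
suff -> : reweight_fun (bayes tau q t) d q = bayes_fun tau d t.
  by rewrite insubdK //; apply: bayes_fun_dist.
apply/ffunP => th; rewrite !ffunE sum_likelihood_ratio bayes_qE.
by field; rewrite !gt_eqF ?q_full.
Qed.

End ChangeOfPrior.

End Bayes.

Theorem lemma1 (R : realFieldType) (Th S : finType)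
  (mu : updating_rule R Th S) (D : belief R Th -> belief R Th -> belief R Th)
  (hD : distorts_with mu D)
  (p : belief R Th) (hp : full_support p)
  (sig tau : experiment R Th S) (s t : S)
  (hs : 0 < bayes_den sig p s) :
  let q := bayes sig p s in
  let r := bayes tau q t in
  full_support q -> full_support (D p q) ->
  0 < \sum_th q th * tau th t ->
  mu tau (D p q) t = D (D p q) (reweight r (D p q) q).
Proof.
move=> q r q_full Dq_full t_prob.
have den_Dq_gt0 : 0 < bayes_den tau (D p q) t.
  by rewrite -bayes_denE in t_prob; exact: bayes_den_gt0_full_support t_prob.
by rewrite (hD _ Dq_full _ _ den_Dq_gt0) /r reweight_bayes.
Qed.
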